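(* Let $A,B\subset\mathbb{H}$ be finite sets with $|A|\geq 2$ and $|B|\geq 2$. Then there exists a line $\ell$ in $\mathbb{H}^2$ such that $2\leq|(A\times B)\cap\ell|\leq 5$.
   Context: $\mathbb{H}$ denotes the quaternions. $\mathbb{H}^2$ is regarded as a left vector space over $\mathbb{H}$. A line in $\mathbb{H}^2$ is a set of the form $\{p+\lambda v:\lambda\in\mathbb{H}\}$ with $p,v\in\mathbb{H}^2$, $v\neq 0$, where $\lambda v$ denotes left scalar multiplication. Equivalently, lines are the sets $\{(x,y):x=c\}$ for $c\in\mathbb{H}$ and the sets $\{(x,y): y=xm+c\}$ for $m,c\in\mathbb{H}$. *)

From Stdlib Require Import Reals List.
Open Scope R_scope.

Record quat : Type := Quat { qr : R; qi : R; qj : R; qk : R }.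

Definition qadd (x y : quat) : quat :=
  Quat (qr x + qr y) (qi x + qi y) (qj x + qj y) (qk x + qk y).

(* Hamilton product: i^2 = j^2 = k^2 = ijk = -1. *)
Definition qmul (x y : quat) : quat :=
  Quat (qr x * qr y - qi x * qi y - qj x * qj y - qk x * qk y)
       (qr x * qi y + qi x * qr y + qj x * qk y - qk x * qj y)
       (qr x * qj y - qi x * qk y + qj x * qr y + qk x * qi y)
       (qr x * qk y + qi x * qj y - qj x * qi y + qk x * qr y).

Definition qzero : quat := Quat 0 0 0 0.

(* H^2 as a left H-vector space. *)
Definition qpt : Type := (quat * quat)%type.

Definition on_line (p v z : qpt) : Prop :=
  exists lam : quat,
    z = (qadd (fst p) (qmul lam (fst v)), qadd (snd p) (qmul lam (snd v))).

Definition is_line (l : qpt -> Prop) : Prop :=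
  exists p v : qpt, v <> (qzero, qzero) /\ forall z, l z <-> on_line p v z.

(* |(A x B) ∩ l| = n, for A, B given as duplicate-free lists. *)
Definition card_grid_line (A B : list quat) (l : qpt -> Prop) (n : nat) : Prop :=
  exists L : list qpt, NoDup L /\ length L = n /\
    forall z : qpt, In z L <-> (In (fst z) A /\ In (snd z) B /\ l z).

(* Pick distinct a1, a2 in A at minimal distance and distinct b1, b2 in B at maximal
   distance, and take the line through (a1, b1) and (a2, b2).  Two of its points
   (a2 + λu, b2 + λw) and (a2 + λ'u, b2 + λ'w), with u = a1 - a2 and w = b1 - b2,
   are at distances |λ - λ'||u| and |λ - λ'||w| in the two coordinates, because the
   quaternion norm is multiplicative.  Minimality of |u| forces |λ - λ'| >= 1 and
   maximality of |w| forces |λ - λ'| <= 1, so the first coordinates of the grid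
   points on the line are pairwise equidistant in H = R^4, and there are at most
   five of them.  The last fact is the Gram-determinant argument: six such points
   give five vectors in R^4 whose Gram matrix (d/2)(I + J) is nonsingular. *)
From Stdlib Require Import Reals List Lra Lia ClassicalEpsilon.
Import ListNotations.
Open Scope R_scope.

Definition qsub (x y : quat) : quat :=
  Quat (qr x - qr y) (qi x - qi y) (qj x - qj y) (qk x - qk y).
Definition qdot (x y : quat) : R := qr x * qr y + qi x * qi y + qj x * qj y + qk x * qk y.
Definition qnorm2 (x : quat) : R := qdot x x.
Definition qdist2 (x y : quat) : R := qnorm2 (qsub x y).

Lemma quat_ext (x y : quat) :
  qr x = qr y -> qi x = qi y -> qj x = qj y -> qk x = qk y -> x = y.
Proof. destruct x, y; simpl; intros; subst; reflexivity. Qed.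

Lemma qnorm2_ge0 x : 0 <= qnorm2 x.
Proof. destruct x; unfold qnorm2, qdot; simpl; nra. Qed.

Lemma qnorm2_eq0 x : qnorm2 x = 0 -> x = qzero.
Proof.
  destruct x as [a b c e]; unfold qnorm2, qdot; simpl; intro H.
  apply quat_ext; simpl; nra.
Qed.

Lemma qdist2_refl x : qdist2 x x = 0.
Proof. destruct x; unfold qdist2, qnorm2, qdot, qsub; simpl; ring. Qed.

Lemma qdist2_eq0 x y : qdist2 x y = 0 -> x = y.
Proof.
  intro H; apply qnorm2_eq0 in H; destruct x, y; unfold qsub in H; simpl in H.
  injection H; intros; apply quat_ext; simpl; lra.
Qed.

Lemma qdist2_pos x y : x <> y -> 0 < qdist2 x y.
Proof.
  intro Hxy; destruct (qnorm2_ge0 (qsub x y)) as [H | H]; [exact H |].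
  exfalso; apply Hxy, qdist2_eq0; symmetry; exact H.
Qed.

Lemma qnorm2_mul x y : qnorm2 (qmul x y) = qnorm2 x * qnorm2 y.
Proof. destruct x, y; unfold qnorm2, qdot, qmul; simpl; ring. Qed.

Lemma qsub_qadd_qmul a l l' u :
  qsub (qadd a (qmul l u)) (qadd a (qmul l' u)) = qmul (qsub l l') u.
Proof. destruct a, l, l', u; apply quat_ext; simpl; ring. Qed.

Lemma qdist2_line a l l' u :
  qdist2 (qadd a (qmul l u)) (qadd a (qmul l' u)) = qdist2 l l' * qnorm2 u.
Proof. unfold qdist2; rewrite qsub_qadd_qmul; apply qnorm2_mul. Qed.

Lemma qdot_polarization x y z :
  qdot (qsub x z) (qsub y z) = (qdist2 x z + qdist2 y z - qdist2 x y) / 2.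
Proof. destruct x, y, z; unfold qdist2, qnorm2, qdot, qsub; simpl; field. Qed.

Definition det3 a b c d e f g h i : R := a*(e*i-f*h) - b*(d*i-f*g) + c*(d*h-e*g).
Definition det4 a11 a12 a13 a14 a21 a22 a23 a24 a31 a32 a33 a34 a41 a42 a43 a44 : R :=
  a11 * det3 a22 a23 a24 a32 a33 a34 a42 a43 a44
 - a12 * det3 a21 a23 a24 a31 a33 a34 a41 a43 a44
 + a13 * det3 a21 a22 a24 a31 a32 a34 a41 a42 a44
 - a14 * det3 a21 a22 a23 a31 a32 a33 a41 a42 a43.
Definition qdet4 (a b c e : quat) : R :=
  det4 (qr a) (qi a) (qj a) (qk a) (qr b) (qi b) (qj b) (qk b)
       (qr c) (qi c) (qj c) (qk c) (qr e) (qi e) (qj e) (qk e).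

Lemma qdet4_sq_gram a b c e : (qdet4 a b c e) ^ 2 =
  det4 (qdot a a) (qdot a b) (qdot a c) (qdot a e)
       (qdot b a) (qdot b b) (qdot b c) (qdot b e)
       (qdot c a) (qdot c b) (qdot c c) (qdot c e)
       (qdot e a) (qdot e b) (qdot e c) (qdot e e).
Proof. destruct a, b, c, e; unfold qdet4, det4, det3, qdot; simpl; ring. Qed.

(* The 5x5 matrix with rows (qdot u_i w, u_i) has vanishing determinant, since its
   first column is a combination of the other four; this is its first-column expansion. *)
Lemma qdet4_cofactor_relation u1 u2 u3 u4 u5 w :
  qdet4 u2 u3 u4 u5 * qdot u1 w - qdet4 u1 u3 u4 u5 * qdot u2 w
  + qdet4 u1 u2 u4 u5 * qdot u3 w - qdet4 u1 u2 u3 u5 * qdot u4 w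
  + qdet4 u1 u2 u3 u4 * qdot u5 w = 0.
Proof. destruct u1, u2, u3, u4, u5, w; unfold qdet4, det4, det3, qdot; simpl; ring. Qed.

Lemma regular_simplex_gram_absurd (u : nat -> quat) (d : R) : 0 < d ->
  (forall i j, (1 <= i <= 5)%nat -> (1 <= j <= 5)%nat ->
     qdot (u i) (u j) = if Nat.eqb i j then d else d / 2) ->
  False.
Proof.
  intros Hd Hgram.
  assert (Hdet : qdet4 (u 1%nat) (u 2%nat) (u 3%nat) (u 4%nat) ^ 2 = 5 / 16 * d ^ 4).
  { rewrite qdet4_sq_gram, !Hgram by lia; simpl; unfold det4, det3; field. }
  pose proof (fun j => qdet4_cofactor_relation
                         (u 1%nat) (u 2%nat) (u 3%nat) (u 4%nat) (u 5%nat) (u j)) as Hrel.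
  pose proof (Hrel 1%nat) as E1; pose proof (Hrel 2%nat) as E2; pose proof (Hrel 3%nat) as E3;
  pose proof (Hrel 4%nat) as E4; pose proof (Hrel 5%nat) as E5.
  rewrite !Hgram in E1, E2, E3, E4, E5 by lia; simpl in E1, E2, E3, E4, E5.
  (* E_j reads (d/2) (c_j + c_1 + ... + c_5) = 0 for the cofactors c_i, so all c_i vanish. *)
  assert (Hzero : d * qdet4 (u 1%nat) (u 2%nat) (u 3%nat) (u 4%nat) = 0) by lra.
  apply Rmult_integral in Hzero as [Hd0 | Hc]; [lra |].
  rewrite Hc in Hdet. assert (0 < d ^ 4) by (apply pow_lt; lra). lra.
Qed.

Lemma equidistant_length_le_5 (l : list quat) (d : R) : 0 < d -> NoDup l ->
  (forall x y, In x l -> In y l -> x <> y -> qdist2 x y = d) ->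
  (length l <= 5)%nat.
Proof.
  intros Hd Hl Hdist.
  destruct (Nat.le_gt_cases (length l) 5) as [Hle | Hgt]; [exact Hle | exfalso].
  set (p i := nth i l qzero).
  assert (Hp : forall i j, (i <= 5)%nat -> (j <= 5)%nat -> i <> j -> qdist2 (p i) (p j) = d).
  { intros i j Hi Hj Hij; apply Hdist; try (apply nth_In; lia).
    intro E; apply Hij, (proj1 (NoDup_nth l qzero) Hl); try lia; exact E. }
  apply (regular_simplex_gram_absurd (fun i => qsub (p i) (p 0%nat)) d Hd).
  intros i j Hi Hj; rewrite qdot_polarization, !Hp by lia.
  destruct (Nat.eqb_spec i j) as [<- | Hij].
  - rewrite qdist2_refl; field.
  - rewrite Hp by lia; field.
Qed.

Lemma list_argmin {T : Type} (f : T -> R) (P : T -> Prop) (l : list T) :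
  (exists t, In t l /\ P t) ->
  exists t, In t l /\ P t /\ forall s, In s l -> P s -> f t <= f s.
Proof.
  induction l as [| a l IH]; intros [t [Ht Pt]]; [destruct Ht |].
  destruct (excluded_middle_informative (exists t, In t l /\ P t)) as [Hl | Hl].
  - destruct (IH Hl) as [m [Hm [Pm Hmin]]].
    destruct (excluded_middle_informative (P a /\ f a <= f m)) as [[Pa Ha] | Ha].
    + exists a; split; [left; reflexivity | split; [exact Pa |]].
      intros s [<- | Hs] Ps; [lra | specialize (Hmin s Hs Ps); lra].
    + exists m; split; [right; exact Hm | split; [exact Pm |]].
      intros s [<- | Hs] Ps; [| auto].
      destruct (Rle_lt_dec (f m) (f a)); [assumption | exfalso; apply Ha; split; [exact Ps | lra]].
  - destruct Ht as [<- | Ht]; [| exfalso; apply Hl; eauto].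
    exists a; split; [left; reflexivity | split; [exact Pt |]].
    intros s [<- | Hs] Ps; [lra | exfalso; apply Hl; eauto].
Qed.

Lemma NoDup_two_distinct {T : Type} (l : list T) :
  NoDup l -> (2 <= length l)%nat -> exists x y, In x l /\ In y l /\ x <> y.
Proof.
  intros Hl Hlen; destruct l as [| x [| y r]]; simpl in Hlen; try lia.
  exists x, y; split; [left; reflexivity | split; [right; left; reflexivity |]].
  intros <-; apply NoDup_cons_iff in Hl as [Hx _]; apply Hx; left; reflexivity.
Qed.

Definition line_through (p q : qpt) : qpt -> Prop :=
  on_line q (qsub (fst p) (fst q), qsub (snd p) (snd q)).

Lemma line_through_is_line p q : fst p <> fst q -> is_line (line_through p q).
Proof.
  intro Hpq; exists q, (qsub (fst p) (fst q), qsub (snd p) (snd q)); split; [| reflexivity].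
  intro E; apply (f_equal fst) in E; cbn [fst] in E.
  apply Hpq, qdist2_eq0; unfold qdist2; rewrite E; unfold qnorm2, qdot; simpl; ring.
Qed.

Lemma line_through_l p q : line_through p q p.
Proof.
  exists (Quat 1 0 0 0); destruct p as [[] []], q as [[] []].
  f_equal; apply quat_ext; simpl; ring.
Qed.

Lemma line_through_r p q : line_through p q q.
Proof.
  exists qzero; destruct p as [[] []], q as [[] []].
  f_equal; apply quat_ext; simpl; ring.
Qed.

Section ExtremalLine.

Variables (A B : list quat) (a1 a2 b1 b2 : quat).
Hypotheses (Ha1 : In a1 A) (Ha2 : In a2 A) (Hb1 : In b1 B) (Hb2 : In b2 B).
Hypotheses (Ha12 : a1 <> a2) (Hb12 : b1 <> b2).
Hypothesis a_min : forall x x', In x A -> In x' A -> x <> x' -> qdist2 a1 a2 <= qdist2 x x'.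
Hypothesis b_max : forall y y', In y B -> In y' B -> qdist2 y y' <= qdist2 b1 b2.

Lemma extremal_line_equidistant x y x' y' :
  In x A -> In y B -> In x' A -> In y' B -> line_through (a1, b1) (a2, b2) (x, y) ->
  line_through (a1, b1) (a2, b2) (x', y') ->
  (x, y) <> (x', y') -> x <> x' /\ qdist2 x x' = qdist2 a1 a2.
Proof.
  intros Hx Hy Hx' Hy' [lam Hl] [lam' Hl'] Hne; cbn [fst snd] in Hl, Hl'.
  injection Hl as -> ->; injection Hl' as -> ->.
  assert (Hlam : 0 < qdist2 lam lam') by (apply qdist2_pos; intros ->; apply Hne; reflexivity).
  pose proof (qdist2_line a2 lam lam' (qsub a1 a2)) as Ex.
  pose proof (qdist2_line b2 lam lam' (qsub b1 b2)) as Ey.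
  fold (qdist2 a1 a2) in Ex; fold (qdist2 b1 b2) in Ey.
  pose proof (qdist2_pos _ _ Ha12); pose proof (qdist2_pos _ _ Hb12).
  assert (Hx_ne : qadd a2 (qmul lam (qsub a1 a2)) <> qadd a2 (qmul lam' (qsub a1 a2)))
    by (intro E; rewrite E, qdist2_refl in Ex; nra).
  split; [exact Hx_ne |].
  pose proof (a_min _ _ Hx Hx' Hx_ne) as Hmin; pose proof (b_max _ _ Hy Hy') as Hmax.
  rewrite Ex in Hmin |- *; rewrite Ey in Hmax.
  assert (Hunit : qdist2 lam lam' = 1) by nra.
  rewrite Hunit; ring.
Qed.

Lemma extremal_line_card (L : list qpt) : NoDup L ->
  (forall z, In z L <-> In (fst z) A /\ In (snd z) B /\ line_through (a1, b1) (a2, b2) z) ->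
  (2 <= length L <= 5)%nat.
Proof.
  intros HL Hmem; split.
  - apply (NoDup_incl_length (l := [(a1, b1); (a2, b2)])).
    + constructor; [| constructor; [intros [] | constructor]].
      intros [E | []]; injection E; congruence.
    + intros z [<- | [<- | []]]; apply Hmem; simpl;
        auto using line_through_l, line_through_r.
  - replace (length L) with (length (map fst L)) by apply length_map.
    apply (equidistant_length_le_5 _ (qdist2 a1 a2)); [exact (qdist2_pos _ _ Ha12) | |].
    + apply NoDup_map_NoDup_ForallPairs; [| exact HL].
      intros [x y] [x' y'] Hz Hz' E.
      destruct (excluded_middle_informative ((x, y) = (x', y'))) as [| Hne]; [assumption | exfalso].
      apply Hmem in Hz as (Hx & Hy & Hl), Hz' as (Hx' & Hy' & Hl').
      exact (proj1 (extremal_line_equidistant _ _ _ _ Hx Hy Hx' Hy' Hl Hl' Hne) E).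
    + intros x x' Hx Hx' Hne.
      apply in_map_iff in Hx as [[x0 y] [<- Hz]], Hx' as [[x0' y'] [<- Hz']].
      apply Hmem in Hz as (Hx & Hy & Hl), Hz' as (Hx' & Hy' & Hl').
      apply (extremal_line_equidistant _ _ _ _ Hx Hy Hx' Hy' Hl Hl').
      intro E; injection E; intros; contradiction.
Qed.

End ExtremalLine.

Theorem theorem4 (A B : list quat) :
  NoDup A -> NoDup B -> (2 <= length A)%nat -> (2 <= length B)%nat ->
  exists (l : qpt -> Prop) (n : nat),
    is_line l /\ card_grid_line A B l n /\ (2 <= n <= 5)%nat.
Proof.
  intros NA NB LA LB.
  destruct (list_argmin (fun t => qdist2 (fst t) (snd t)) (fun t => fst t <> snd t)
              (list_prod A A)) as [[a1 a2] (Ha & Ha12 & Hmin)].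
  { destruct (NoDup_two_distinct A NA LA) as (x & y & Hx & Hy & Hxy).
    exists (x, y); split; [apply in_prod |]; assumption. }
  destruct (list_argmin (fun t => - qdist2 (fst t) (snd t)) (fun t => fst t <> snd t)
              (list_prod B B)) as [[b1 b2] (Hb & Hb12 & Hmax)].
  { destruct (NoDup_two_distinct B NB LB) as (x & y & Hx & Hy & Hxy).
    exists (x, y); split; [apply in_prod |]; assumption. }
  apply in_prod_iff in Ha as [Ha1 Ha2], Hb as [Hb1 Hb2]; simpl in Ha12, Hb12.
  assert (A_min : forall x x', In x A -> In x' A -> x <> x' -> qdist2 a1 a2 <= qdist2 x x')
    by (intros x x' Hx Hx'; exact (Hmin (x, x') (in_prod _ _ _ _ Hx Hx'))).
  assert (B_max : forall y y', In y B -> In y' B -> qdist2 y y' <= qdist2 b1 b2).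
  { intros y y' Hy Hy'; destruct (excluded_middle_informative (y = y')) as [<- | Hyy'].
    - rewrite qdist2_refl; apply qnorm2_ge0.
    - pose proof (Hmax (y, y') (in_prod _ _ _ _ Hy Hy') Hyy'); simpl in *; lra. }
  set (line := line_through (a1, b1) (a2, b2)).
  set (L := nodup (fun z z' => excluded_middle_informative (z = z'))
              (filter (fun z => if excluded_middle_informative (line z) then true else false)
                 (list_prod A B))).
  assert (Hmem : forall z : quat * quat, In z L <-> In (fst z) A /\ In (snd z) B /\ line z).
  { intros [x y]; unfold L; rewrite nodup_In, filter_In, in_prod_iff; simpl.
    destruct excluded_middle_informative; intuition discriminate. }
  exists line, (length L); split; [| split].
  - exact (line_through_is_line (a1, b1) (a2, b2) Ha12).
  - exists L; split; [apply NoDup_nodup | split; [reflexivity | exact Hmem]].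
  - exact (extremal_line_card A B a1 a2 b1 b2 Ha1 Ha2 Hb1 Hb2 Ha12 Hb12 A_min B_max
             L (NoDup_nodup _ _) Hmem).
Qed.
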